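(* Let $r\ge 0$ be fixed. There is a constant $C>0$ depending only on $r$ such that for every $n$ and every hypergraph $H\in\mathcal K_r(n)$, there exists a hypergraph $H'$ on $[n]$ with at most $C n^{r+1}$ hyperedges (i.e. $\mathcal O(n^{r+1})$) such that $H=\mathrm{cl}_r(H')$.
   Context: Hypergraphs on $V=[n]$ are identified with their hyperedge sets. $\mathcal K_r(n)$ is the class of hypergraphs $\mathcal E$ on $V$ satisfying: (R0) every $X\subseteq V$ with $|X|\le r$ is in $\mathcal E$; (R1) $A\in\mathcal E\Rightarrow V\setminus A\in\mathcal E$; (R2) $A,B\in\mathcal E$ and $|A\cap B|\ge r\Rightarrow A\cup B\in\mathcal E$. For a hypergraph $H$ on $V$, $\mathrm{cl}_r(H)$ is the intersection of all hypergraphs in $\mathcal K_r(n)$ containing $H$. *)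

From mathcomp Require Import all_boot.
Set Implicit Arguments. Unset Strict Implicit. Unset Printing Implicit Defensive.

(* The vertex set [n] is 'I_n; a hypergraph on [n] is identified with its set
   of hyperedges, i.e. an element of {set {set 'I_n}}. *)
Definition hypergraph (n : nat) := {set {set 'I_n}}.

(* Membership in K_r(n): conditions (R0), (R1), (R2). *)
Definition in_Kr (r n : nat) (E : hypergraph n) : bool :=
  [&& [forall X : {set 'I_n}, (#|X| <= r) ==> (X \in E)],
      [forall A : {set 'I_n}, (A \in E) ==> (~: A \in E)] &
      [forall A : {set 'I_n}, forall B : {set 'I_n},
         [&& A \in E, B \in E & r <= #|A :&: B|] ==> (A :|: B \in E)]].

Definition cl_r (r n : nat) (H : hypergraph n) : hypergraph n :=
  \bigcap_(E : hypergraph n | in_Kr r E && (H \subset E)) E.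

From mathcomp Require Import all_boot zify.
Set Implicit Arguments. Unset Strict Implicit. Unset Printing Implicit Defensive.

(* For every (r+1)-set S keep one smallest edge of H containing S; there are at
   most n^(r+1) of them.  Let A be an edge with |A| <= n/2 and T an r-subset of
   A.  For x in A \ T the smallest edge P through T + x lies inside A: otherwise
   A :&: P, which is an edge by (R1) and (R2) since the complements of A and P
   still share r points, would be a smaller edge through T + x.  So A is the
   union of T and of these P, which all contain T, and (R2) puts A into every
   member of K_r containing the kept edges.  Edges with |A| > n/2 follow by
   complementation (R1). *)

Section KrAxioms.

Variables (r n : nat) (E : hypergraph n).
Hypothesis KE : in_Kr r E.

Lemma in_Kr_small (X : {set 'I_n}) : #|X| <= r -> X \in E.
Proof. by move: KE => /and3P[/forallP/(_ X)/implyP]. Qed.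

Lemma in_Kr_setC (A : {set 'I_n}) : A \in E -> ~: A \in E.
Proof. by move: KE => /and3P[_ /forallP/(_ A)/implyP]. Qed.

Lemma in_Kr_setT : [set: 'I_n] \in E.
Proof. by rewrite -setC0; apply/in_Kr_setC/in_Kr_small; rewrite cards0. Qed.

Lemma in_Kr_setU (A B : {set 'I_n}) :
  A \in E -> B \in E -> r <= #|A :&: B| -> A :|: B \in E.
Proof.
move=> AE BE rAB; move: KE => /and3P[_ _ /forallP/(_ A)/forallP/(_ B)/implyP].
by apply; rewrite AE BE rAB.
Qed.

Lemma in_Kr_setI (A B : {set 'I_n}) :
  A \in E -> B \in E -> r <= #|~: (A :|: B)| -> A :&: B \in E.
Proof.
move=> AE BE rAB; rewrite -[A :&: B]setCK setCI.
by apply/in_Kr_setC/in_Kr_setU; rewrite -?setCU //; apply: in_Kr_setC.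
Qed.

Lemma in_Kr_bigcup (I : finType) (P : pred I) (F : I -> {set 'I_n})
    (T : {set 'I_n}) :
  T \in E -> r <= #|T| ->
  (forall i, P i -> F i \in E) -> (forall i, P i -> T \subset F i) ->
  T :|: \bigcup_(i | P i) F i \in E.
Proof.
move=> TE rT FE TF.
apply: (big_ind (fun X => T :|: X \in E)); first by rewrite setU0.
  move=> X Y TX TY; rewrite -(setUidPl (subxx T)) setUACA.
  apply: in_Kr_setU => //; apply: leq_trans rT _.
  by apply: subset_leq_card; rewrite subsetI !subsetUl.
by move=> i Pi; rewrite (setUidPr (TF i Pi)) FE.
Qed.

End KrAxioms.

Lemma cl_r_eq r n (G H : hypergraph n) :
  in_Kr r H -> G \subset H ->
  (forall E : hypergraph n, in_Kr r E -> G \subset E -> H \subset E) ->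
  cl_r r G = H.
Proof.
move=> KH GH Hmin; apply/eqP; rewrite eqEsubset; apply/andP; split.
  by apply: bigcap_inf; rewrite KH GH.
by apply/bigcapsP => E /andP[KE GE]; apply: Hmin.
Qed.

Definition min_edge n (H : hypergraph n) (S : {set 'I_n}) : {set 'I_n} :=
  [arg min_(B < setT | (B \in H) && (S \subset B)) #|B|].

Section MinEdge.

Variables (n : nat) (H : hypergraph n).
Hypothesis HT : setT \in H.

Lemma min_edgeP (S : {set 'I_n}) :
  [/\ min_edge H S \in H, S \subset min_edge H S &
      forall B, B \in H -> S \subset B -> #|min_edge H S| <= #|B|].
Proof.
rewrite /min_edge; case: arg_minnP => [|B /andP[BH SB] Bmin].
  by rewrite HT subsetT.
by split=> // C CH SC; apply: Bmin; rewrite CH.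
Qed.

Lemma mem_min_edge (S : {set 'I_n}) : min_edge H S \in H.
Proof. by case: (min_edgeP S). Qed.

Lemma sub_min_edge (S : {set 'I_n}) : S \subset min_edge H S.
Proof. by case: (min_edgeP S). Qed.

Lemma min_edge_min (S B : {set 'I_n}) :
  B \in H -> S \subset B -> #|min_edge H S| <= #|B|.
Proof. by case: (min_edgeP S) => _ _; apply. Qed.

End MinEdge.

Lemma min_edge_sub r n (H : hypergraph n) (A S : {set 'I_n}) :
  in_Kr r H -> A \in H -> S \subset A -> #|A|.*2 + r <= n + #|S| ->
  min_edge H S \subset A.
Proof.
move=> KH AH SA small; have HT := in_Kr_setT KH.
set P := min_edge H S.
have PA : #|P| <= #|A| := min_edge_min HT AH SA.
have SAP : S \subset A :&: P by rewrite subsetI SA sub_min_edge.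
have APH : A :&: P \in H.
  apply: (in_Kr_setI KH AH (mem_min_edge HT S)).
  have := cardsC (A :|: P); have := cardsUI A P; have := subset_leq_card SAP.
  rewrite -/P card_ord -muln2 in small *; lia.
have /eqP <- : A :&: P == P.
  by rewrite eqEcard subsetIr min_edge_min.
exact: subsetIl.
Qed.

Lemma ffact_leq_expn n k : n ^_ k <= n ^ k.
Proof. by elim: k => // k IH; rewrite ffactnSr expnSr leq_mul // leq_subr. Qed.

Lemma bin_leq_expn n k : 'C(n, k) <= n ^ k.
Proof.
by rewrite (leq_trans _ (ffact_leq_expn n k)) // -bin_ffact leq_pmulr ?fact_gt0.
Qed.

Lemma subset_of_card (T : finType) (B : {set T}) k :
  k <= #|B| -> exists2 A : {set T}, A \subset B & #|A| = k.
Proof.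
rewrite -bin_gt0 -cards_draws => /card_gt0P[A].
by rewrite inE => /andP[AB /eqP Ak]; exists A.
Qed.

Definition min_edges r n (H : hypergraph n) : hypergraph n :=
  [set min_edge H S | S in [set S : {set 'I_n} | #|S| == r.+1]].

Lemma card_min_edges r n (H : hypergraph n) : #|min_edges r H| <= n ^ r.+1.
Proof.
apply: leq_trans (leq_imset_card _ _) _.
by rewrite card_draws card_ord bin_leq_expn.
Qed.

Lemma min_edges_sub r n (H : hypergraph n) :
  [set: 'I_n] \in H -> min_edges r H \subset H.
Proof.
by move=> HT; apply/subsetP => _ /imsetP[S _ ->]; apply: mem_min_edge.
Qed.

Section ClosureOfMinEdges.

Variables (r n : nat) (H E : hypergraph n).
Hypotheses (KH : in_Kr r H) (KE : in_Kr r E) (HE : min_edges r H \subset E).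

Lemma min_edge_in_closure (S : {set 'I_n}) :
  #|S| = r.+1 -> min_edge H S \in E.
Proof.
by move=> Sr; apply: (subsetP HE); apply/imsetP; exists S; rewrite ?inE ?Sr.
Qed.

Lemma small_edge_in_closure (A : {set 'I_n}) :
  A \in H -> #|A|.*2 <= n -> A \in E.
Proof.
move=> AH small; have HT := in_Kr_setT KH.
case: (leqP #|A| r) => [|/ltnW rA]; first exact: in_Kr_small.
have [T TA Tr] := subset_of_card rA.
have TxT x : x \notin T -> #|x |: T| = r.+1 by move=> xT; rewrite cardsU1 xT Tr.
have PA x : x \in A :\: T -> min_edge H (x |: T) \subset A.
  move=> /setDP[xA xT]; apply: (min_edge_sub KH) => //.
    by rewrite subUset sub1set xA.
  by rewrite TxT // -muln2 in small *; lia.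
suff -> : A = T :|: \bigcup_(x in A :\: T) min_edge H (x |: T).
  apply: (in_Kr_bigcup KE); rewrite ?Tr //.
  - by apply: (in_Kr_small KE); rewrite Tr.
  - by move=> x /setDP[_ xT]; apply/min_edge_in_closure/TxT.
  - by move=> x _; apply: subset_trans (subsetUr _ _) (sub_min_edge HT _).
apply/eqP; rewrite eqEsubset subUset TA (introT bigcupsP PA) !andbT.
apply/subsetP => y yA; rewrite inE; case: (boolP (y \in T)) => //= yT.
apply/bigcupP; exists y; first by rewrite inE yT.
exact: subsetP (sub_min_edge HT _) _ (setU11 _ _).
Qed.

Lemma edge_in_closure (A : {set 'I_n}) : A \in H -> A \in E.
Proof.
move=> AH; case: (leqP #|A|.*2 n) => [|large].
  exact: small_edge_in_closure.
rewrite -[A]setCK; apply/(in_Kr_setC KE)/small_edge_in_closure.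
  exact: (in_Kr_setC KH).
by have := cardsC A; rewrite card_ord -!muln2 in large *; lia.
Qed.

End ClosureOfMinEdges.

Lemma cl_r_min_edges r n (H : hypergraph n) :
  in_Kr r H -> cl_r r (min_edges r H) = H.
Proof.
move=> KH; apply: cl_r_eq => // [|E KE HE].
  exact/min_edges_sub/(in_Kr_setT KH).
by apply/subsetP => A; apply: (edge_in_closure KH KE HE).
Qed.

Theorem mainTheorem12 (r : nat) :
  exists C : nat, 0 < C /\
    forall (n : nat) (H : hypergraph n), in_Kr r H ->
      exists H' : hypergraph n, #|H'| <= C * n ^ r.+1 /\ H = cl_r r H'.
Proof.
exists 1; split=> // n H KH; exists (min_edges r H).
by rewrite mul1n card_min_edges cl_r_min_edges.
Qed.
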